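(* Let $A=(a_{i,j})$ and $B=(b_{i,j})$ be skew-symmetric $n\times n$ matrices over $\mathbb F$. Then the biderivation of $\mathbb F(x_1,\dots,x_n)$ defined by $\{x_i,x_j\}_b=a_{i,j}x_ix_j+b_{i,j}$ satisfies the Jacobi identity (i.e. $B$ is a deformation matrix of $A$) if and only if $b_{i,j}(a_{i,k}+a_{j,k})=0$ for all pairwise distinct $i,j,k\in\{1,\dots,n\}$.
   Context: $\mathbb F\in\{\mathbb R,\mathbb C\}$. A biderivation is a skew-symmetric bilinear map which is a derivation in each argument; it is determined by its values on the generators $x_i$. *)

From HB Require Import structures.
From mathcomp Require Import all_boot all_order all_algebra.
From mathcomp Require Import mpoly.
Set Implicit Arguments. Unset Strict Implicit. Unset Printing Implicit Defensive.
Import Order.TTheory GRing.Theory Num.Theory.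
Local Open Scope ring_scope.
Local Open Scope quotient_scope.

(* The rational function field F(x_1,...,x_n), as the fraction field of the
   polynomial ring {mpoly F[n]}; the generator x_i is indexed by i : 'I_n. *)
Definition ratfun (F : fieldType) (n : nat) := {fraction {mpoly F[n]}}.

Definition xgen (F : fieldType) (n : nat) (i : 'I_n) : ratfun F n :=
  tofrac ('X_i : {mpoly F[n]}).

(* The partial derivative d/dx_i on F(x_1,...,x_n): the unique extension of
   the partial derivative of polynomials, via the quotient rule applied to any
   representative p/q of the fraction. *)
Definition fderiv (F : fieldType) (n : nat) (i : 'I_n) (f : ratfun F n)
  : ratfun F n :=
  let r := repr f in
  let p := (\n_r : {mpoly F[n]}) in
  let q := (\d_r : {mpoly F[n]}) in
  tofrac (mderiv i p * q - p * mderiv i q) / tofrac (q ^+ 2).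

Definition bider (F : fieldType) (n : nat) (pi : 'I_n -> 'I_n -> ratfun F n)
  (f g : ratfun F n) : ratfun F n :=
  \sum_(i < n) \sum_(j < n) fderiv i f * fderiv j g * pi i j.

Definition jacobi (F : fieldType) (n : nat)
  (br : ratfun F n -> ratfun F n -> ratfun F n) : Prop :=
  forall f g h : ratfun F n,
    br f (br g h) + br g (br h f) + br h (br f g) = 0.

Definition quad_pi (F : fieldType) (n : nat) (A B : 'M[F]_n)
  (i j : 'I_n) : ratfun F n :=
  tofrac ((A i j)%:MP * 'X_i * 'X_j + (B i j)%:MP : {mpoly F[n]}).

Definition skew_mat (F : fieldType) (n : nat) (M : 'M[F]_n) : Prop :=
  M^T = - M.

From HB Require Import structures.
From mathcomp Require Import all_boot all_order all_algebra.
From mathcomp Require Import mpoly.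
From mathcomp Require Import ring.
Import Order.TTheory GRing.Theory Num.Theory.
Local Open Scope ring_scope.
Local Open Scope quotient_scope.
Set Implicit Arguments. Unset Strict Implicit.

(* 1. The partial derivatives d/dx_i of F(x_1,...,x_n) (defined through an
      arbitrary representative p/q by the quotient rule) are additive,
      satisfy the Leibniz rule and commute with each other.  The field
      identities behind this are isolated in the section QuotientRule.
   2. For any commuting derivations D_k of a commutative ring and any skew
      matrix pi, the Jacobiator of the biderivation {f, g} = sum D_i f D_j g
      pi_ij is sum_{a,b,c} D_a f D_b g D_c h J(a,b,c), where
      J(a,b,c) = sum_k pi_ak D_k pi_bc + (cyclic): the second-order terms
      cancel by skewness.  So the Jacobi identity holds iff every
      coefficient J(a,b,c) vanishes (its value on coordinates).
   3. For pi_ij = a_ij x_i x_j + b_ij with constant skew a, b, one computes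
      J(a,b,c) = c_abc x_c + c_cab x_b + c_bca x_a with
      c_ijk = b_ij (a_ik + a_jk); the terms with repeated indices always
      cancel (skew matrices have zero diagonal in characteristic 0), and
      the x_i are linearly independent, which gives both directions. *)

(* Algebra of the quotient rule: qderiv a a' b b' is the derivative of a/b
   when a, b have derivatives a', b'. *)
Section QuotientRule.
Variable K : fieldType.

Definition qderiv (a a' b b' : K) : K := (a' * b - a * b') / b ^+ 2.

(* Symmetry of second derivatives of a/b, given the symmetry a_ij = a_ji,
   b_ij = b_ji of the second derivatives of a and b (here b is called e). *)
Lemma qderiv_comm (a ai aj aij e ei ej eij : K) :
  qderiv (aj * e - a * ej) (aij * e + aj * ei - (ai * ej + a * eij))
         (e ^+ 2) (ei * e + e * ei) =
  qderiv (ai * e - a * ei) (aij * e + ai * ej - (aj * ei + a * eij))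
         (e ^+ 2) (ej * e + e * ej).
Proof. rewrite /qderiv; ring. Qed.

Variables (b d : K).
Hypotheses (b0 : b != 0) (d0 : d != 0).

(* Well-definedness: if a/b = c/d, and the derivatives are compatible with
   a d = c b, both representatives yield the same derivative. *)
Lemma qderiv_equiv (a a' b' c c' d' : K) :
  a * d = c * b -> a' * d + a * d' = c' * b + c * b' ->
  qderiv c c' d d' = qderiv a a' b b'.
Proof.
move=> eq_ad eq_der.
have def_c : c = a * d / b by rewrite eq_ad mulfK.
have def_c' : c' = (a' * d + a * d' - c * b') / b.
  by apply/(mulIf b0); rewrite divfK // eq_der; ring.
rewrite /qderiv def_c' def_c; field; by rewrite b0 d0.
Qed.

(* Sum rule, for a/b + c/d = (a d + c b)/(b d). *)
Lemma qderivD (a a' b' c c' d' : K) :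
  qderiv (a * d + c * b) (a' * d + a * d' + (c' * b + c * b')) (b * d)
         (b' * d + b * d') = qderiv a a' b b' + qderiv c c' d d'.
Proof. by rewrite /qderiv; field; rewrite b0 d0. Qed.

(* Leibniz rule, for (a/b)(c/d) = (a c)/(b d). *)
Lemma qderivM (a a' b' c c' d' : K) :
  qderiv (a * c) (a' * c + a * c') (b * d) (b' * d + b * d') =
  qderiv a a' b b' * (c / d) + a / b * qderiv c c' d d'.
Proof. by rewrite /qderiv; field; rewrite b0 d0. Qed.

End QuotientRule.

Lemma frac_repr (R : idomainType) (f : {fraction R}) :
  f = tofrac (\n_(repr f)) / tofrac (\d_(repr f)).
Proof.
rewrite -{1}[f]reprK; set r := repr f; unlock tofrac.
change (\pi_({fraction R}) r =
  FracField.mul (\pi_({fraction R}) (Ratio (\n_r) 1))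
                (FracField.inv (\pi_({fraction R}) (Ratio (\d_r) 1)))).
rewrite -FracField.pi_inv -FracField.pi_mul.
apply/eqmodP => /=.
rewrite FracField.equivfE /FracField.mulf /FracField.invf /=.
rewrite !numden_Ratio ?oner_neq0 ?mulf_neq0 ?oner_neq0 //.
  by rewrite mulr1 mul1r mulrC.
all: by rewrite ?eqxx ?denom_ratioP.
Qed.

Lemma frac_exists (R : idomainType) (f : {fraction R}) :
  exists a b : R, b != 0 /\ f = tofrac a / tofrac b.
Proof.
exists \n_(repr f), \d_(repr f).
by split; [exact: denom_ratioP | exact: frac_repr].
Qed.

Section FracDeriv.
Variables (F : fieldType) (n : nat).
Local Notation P := {mpoly F[n]}.
Local Notation K := (ratfun F n).
Local Notation tf := (@tofrac P).

Lemma fderivE (i : 'I_n) (f : K) :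
  fderiv i f = qderiv (tf \n_(repr f)) (tf (\n_(repr f))^`M(i))
                      (tf \d_(repr f)) (tf (\d_(repr f))^`M(i)).
Proof. by rewrite /fderiv /qderiv rmorphXn !rmorphB !rmorphM. Qed.

Lemma repr_cross (p q : P) (f : K) : q != 0 -> f = tf p / tf q ->
  p * \d_(repr f) = \n_(repr f) * q.
Proof.
move=> q0 def_f; apply/eqP; rewrite -tofrac_eq !rmorphM /=.
by rewrite -eqr_div ?tofrac_eq0 ?denom_ratioP // -frac_repr def_f.
Qed.

Lemma fderiv_frac (i : 'I_n) (p q : P) : q != 0 ->
  fderiv i (tf p / tf q) = qderiv (tf p) (tf p^`M(i)) (tf q) (tf q^`M(i)).
Proof.
move=> q0; rewrite fderivE.
have := repr_cross q0 (erefl (tf p / tf q)).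
set N := \n_ _; set D := \d_ _ => eq_pD.
have eq_der := congr1 (mderiv i) eq_pD; rewrite !mderivM in eq_der.
move: (congr1 tf eq_pD) (congr1 tf eq_der); rewrite !(rmorphD, rmorphM) /=.
by apply: qderiv_equiv; rewrite tofrac_eq0 ?denom_ratioP.
Qed.

Lemma fderiv_tofrac (i : 'I_n) (p : P) : fderiv i (tf p) = tf p^`M(i).
Proof.
rewrite -[tf p]divr1 -(rmorph1 tf) fderiv_frac; last exact: oner_neq0.
rewrite -mpolyC1 mderivC /qderiv !rmorph0 rmorph1.
by rewrite !(mulr1, mulr0, subr0, expr1n, divr1).
Qed.

Lemma fderivD (i : 'I_n) (f g : K) :
  fderiv i (f + g) = fderiv i f + fderiv i g.
Proof.
have [a [b [b0 ->]]] := frac_exists f; have [c [d [d0 ->]]] := frac_exists g.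
have b0' : tf b != 0 by rewrite tofrac_eq0.
have d0' : tf d != 0 by rewrite tofrac_eq0.
rewrite (addf_div _ _ b0' d0') -!rmorphM -rmorphD.
rewrite !fderiv_frac //; last exact: mulf_neq0.
rewrite mderivD !mderivM !(rmorphD, rmorphM) /=.
exact: (qderivD b0' d0').
Qed.

Lemma fderivM (i : 'I_n) (f g : K) :
  fderiv i (f * g) = fderiv i f * g + f * fderiv i g.
Proof.
have [a [b [b0 ->]]] := frac_exists f; have [c [d [d0 ->]]] := frac_exists g.
have b0' : tf b != 0 by rewrite tofrac_eq0.
have d0' : tf d != 0 by rewrite tofrac_eq0.
rewrite mulf_div -!rmorphM !fderiv_frac //; last exact: mulf_neq0.
rewrite !mderivM !(rmorphD, rmorphM) /=.
exact: (qderivM b0' d0').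
Qed.

Lemma fderiv_comm (i j : 'I_n) (f : K) :
  fderiv i (fderiv j f) = fderiv j (fderiv i f).
Proof.
have [a [b [b0 ->]]] := frac_exists f.
have b2 : b ^+ 2 != 0 by rewrite expf_neq0.
rewrite !fderiv_frac // /qderiv -!rmorphXn -!rmorphM -!rmorphB !fderiv_frac //.
rewrite !expr2 !(mderivB, mderivM) (mderiv_comm i j a) (mderiv_comm i j b).
rewrite !(rmorphB, rmorphD, rmorphM) /= -!expr2.
exact: qderiv_comm.
Qed.
End FracDeriv.

Lemma sum_delta (R : pzSemiRingType) (n : nat) (b : 'I_n) (G : 'I_n -> R) :
  \sum_(k < n) (b == k)%:R * G k = G b.
Proof.
rewrite (bigD1 b) //= eqxx mul1r big1 ?addr0 // => k kb.
by rewrite eq_sym (negbTE kb) mul0r.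
Qed.

Section Jacobiator.
Variables (R : comPzRingType) (n : nat) (D : 'I_n -> R -> R).
Hypothesis derD : forall k x y, D k (x + y) = D k x + D k y.
Hypothesis derM : forall k x y, D k (x * y) = D k x * y + x * D k y.
Hypothesis der_comm : forall k l x, D k (D l x) = D l (D k x).
Variable pi : 'I_n -> 'I_n -> R.
Hypothesis pi_skew : forall i j, pi j i = - pi i j.

(* {f, g} = sum_{i,j} D_i f D_j g pi_ij; for D = fderiv this is bider. *)
Definition bracket (f g : R) : R :=
  \sum_(i < n) \sum_(j < n) D i f * D j g * pi i j.

Lemma der0 k : D k 0 = 0.
Proof. by apply: (@addrI _ (D k 0)); rewrite -derD !addr0. Qed.

Lemma der_sum k (I : Type) (r : seq I) (P : pred I) (G : I -> R) :
  D k (\sum_(x <- r | P x) G x) = \sum_(x <- r | P x) D k (G x).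
Proof. exact: (big_morph (D k) (derD k) (der0 k)). Qed.

(* Expanding {f, {g, h}} by the Leibniz rule yields three kinds of terms:
   second derivatives of g, second derivatives of h, derivatives of pi. *)
Definition hess_mid (f g h : R) : R :=
  \sum_(l < n) \sum_(k < n) \sum_(i < n) \sum_(j < n)
    D l f * D k (D i g) * D j h * pi i j * pi l k.
Definition hess_last (f g h : R) : R :=
  \sum_(l < n) \sum_(k < n) \sum_(i < n) \sum_(j < n)
    D l f * D i g * D k (D j h) * pi i j * pi l k.
Definition pi_deriv_part (f g h : R) : R :=
  \sum_(l < n) \sum_(k < n) \sum_(i < n) \sum_(j < n)
    D l f * D i g * D j h * D k (pi i j) * pi l k.

Lemma bracket_bracketE f g h :
  bracket f (bracket g h) =
  hess_mid f g h + hess_last f g h + pi_deriv_part f g h.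
Proof.
rewrite /bracket -!big_split; apply: eq_bigr => l _.
rewrite -!big_split; apply: eq_bigr => k _.
rewrite der_sum mulr_sumr mulr_suml -!big_split; apply: eq_bigr => i _.
rewrite der_sum mulr_sumr mulr_suml -!big_split; apply: eq_bigr => j _.
rewrite !derM /=; ring.
Qed.

Local Notation I4 := ('I_n * 'I_n * 'I_n * 'I_n)%type.

Lemma sum4E (G : 'I_n -> 'I_n -> 'I_n -> 'I_n -> R) :
  \sum_(a < n) \sum_(b < n) \sum_(c < n) \sum_(d < n) G a b c d =
  \sum_(p : I4) G p.1.1.1 p.1.1.2 p.1.2 p.2.
Proof. by rewrite !pair_bigA. Qed.

(* The second-derivative terms cancel in pairs, by skewness of pi and
   commutation of the derivations. *)
Lemma hess_cancel f g h : hess_mid f g h + hess_last h f g = 0.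
Proof.
rewrite /hess_mid /hess_last !sum4E.
pose tau (p : I4) : I4 := (p.1.2, p.2, p.1.1.2, p.1.1.1).
have tauI : injective tau by move=> [[[? ?] ?] ?] [[[? ?] ?] ?] [-> -> -> ->].
rewrite (reindex_inj tauI) -big_split big1 // => [[[[a b] c] d]] _ /=.
rewrite (der_comm d b) (pi_skew a b); ring.
Qed.

(* The coefficient J(a,b,c) of D_a f D_b g D_c h in the Jacobiator (up to
   a factor, the Schouten bracket [pi, pi]). *)
Definition schouten (a b c : 'I_n) : R := \sum_(k < n)
  (pi a k * D k (pi b c) + pi b k * D k (pi c a) + pi c k * D k (pi a b)).

Lemma pi_deriv_cyclic f g h :
  pi_deriv_part f g h + pi_deriv_part g h f + pi_deriv_part h f g =
  \sum_(a < n) D a f * (\sum_(b < n) D b g * (\sum_(c < n) D c h * schouten a b c)).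
Proof.
have -> : \sum_(a < n) D a f * (\sum_(b < n) D b g *
            (\sum_(c < n) D c h * schouten a b c)) =
  \sum_(a < n) \sum_(b < n) \sum_(c < n) \sum_(k < n)
     (D a f * D b g * D c h * (pi a k * D k (pi b c))
     + D a f * D b g * D c h * (pi b k * D k (pi c a))
     + D a f * D b g * D c h * (pi c k * D k (pi a b))).
  apply: eq_bigr => a _; rewrite mulr_sumr; apply: eq_bigr => b _.
  rewrite !mulr_sumr; apply: eq_bigr => c _.
  rewrite /schouten !mulr_sumr; apply: eq_bigr => k _; ring.
rewrite [in RHS]sum4E !big_split /= /pi_deriv_part !sum4E.
pose t1 (p : I4) : I4 := (p.1.1.1, p.2, p.1.1.2, p.1.2).
pose t2 (p : I4) : I4 := (p.1.1.2, p.2, p.1.2, p.1.1.1).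
pose t3 (p : I4) : I4 := (p.1.2, p.2, p.1.1.1, p.1.1.2).
have t1I : injective t1 by move=> [[[? ?] ?] ?] [[[? ?] ?] ?] [-> -> -> ->].
have t2I : injective t2 by move=> [[[? ?] ?] ?] [[[? ?] ?] ?] [-> -> -> ->].
have t3I : injective t3 by move=> [[[? ?] ?] ?] [[[? ?] ?] ?] [-> -> -> ->].
congr (_ + _ + _).
- rewrite [LHS](reindex_inj t1I).
  by apply: eq_bigr => [[[[a b] c] k]] _ /=; ring.
- rewrite [LHS](reindex_inj t2I).
  by apply: eq_bigr => [[[[a b] c] k]] _ /=; ring.
- rewrite [LHS](reindex_inj t3I).
  by apply: eq_bigr => [[[[a b] c] k]] _ /=; ring.
Qed.

Lemma jacobiatorE f g h :
  bracket f (bracket g h) + bracket g (bracket h f) + bracket h (bracket f g) =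
  \sum_(a < n) D a f * (\sum_(b < n) D b g * (\sum_(c < n) D c h * schouten a b c)).
Proof.
rewrite -pi_deriv_cyclic !bracket_bracketE.
apply/eqP; rewrite -subr_eq0; apply/eqP.
transitivity ((hess_mid f g h + hess_last h f g) +
              (hess_mid g h f + hess_last f g h) +
              (hess_mid h f g + hess_last g h f)); first ring.
by rewrite !hess_cancel !addr0.
Qed.

Lemma jacobiator_coord (x : 'I_n -> R) :
  (forall k i, D k (x i) = (i == k)%:R) -> forall a b c,
  bracket (x a) (bracket (x b) (x c)) + bracket (x b) (bracket (x c) (x a)) +
  bracket (x c) (bracket (x a) (x b)) = schouten a b c.
Proof.
move=> D_coord a b c; rewrite jacobiatorE.
under eq_bigr => ? _ do rewrite D_coord; rewrite sum_delta.
under eq_bigr => ? _ do rewrite D_coord; rewrite sum_delta.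
by under eq_bigr => ? _ do rewrite D_coord; rewrite sum_delta.
Qed.

Lemma jacobi_of_schouten0 : (forall a b c, schouten a b c = 0) -> forall f g h,
  bracket f (bracket g h) + bracket g (bracket h f) + bracket h (bracket f g) = 0.
Proof.
move=> schouten0 f g h; rewrite jacobiatorE big1 // => a _.
rewrite big1 ?mulr0 // => b _; rewrite big1 ?mulr0 // => c _.
by rewrite schouten0 mulr0.
Qed.

End Jacobiator.

Section QuadraticBracket.
Variables (R : comPzRingType) (n : nat) (D : 'I_n -> R -> R).
Hypothesis derD : forall k x y, D k (x + y) = D k x + D k y.
Hypothesis derM : forall k x y, D k (x * y) = D k x * y + x * D k y.
Variables (x : 'I_n -> R) (alpha beta : 'I_n -> 'I_n -> R).
Hypothesis D_coord : forall k i, D k (x i) = (i == k)%:R.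
Hypothesis D_alpha : forall k i j, D k (alpha i j) = 0.
Hypothesis D_beta : forall k i j, D k (beta i j) = 0.
Hypothesis alpha_skew : forall i j, alpha j i = - alpha i j.
Hypothesis beta_skew : forall i j, beta j i = - beta i j.
Variable pi : 'I_n -> 'I_n -> R.
Hypothesis pi_quad : forall i j, pi i j = alpha i j * x i * x j + beta i j.

Lemma pi_quad_skew i j : pi j i = - pi i j.
Proof. rewrite !pi_quad alpha_skew beta_skew; ring. Qed.

(* The coefficient c_ijk = beta_ij (alpha_ik + alpha_jk) of x_k in J(i,j,k). *)
Definition jcoef (i j k : 'I_n) : R := beta i j * (alpha i k + alpha j k).

Lemma D_pi_quad k i j :
  D k (pi i j) = alpha i j * ((i == k)%:R * x j + x i * (j == k)%:R).
Proof. rewrite pi_quad derD !derM D_alpha D_beta !D_coord; ring. Qed.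

(* Since D_k pi_ij only involves x_i, x_j, the sum over k in J collapses. *)
Lemma schouten_pi_sum (a b c : 'I_n) : schouten D pi a b c =
  alpha b c * (pi a b * x c + pi a c * x b) +
  alpha c a * (pi b c * x a + pi b a * x c) +
  alpha a b * (pi c a * x b + pi c b * x a).
Proof.
have pick_two (y : 'I_n -> R) (e : R) (i j : 'I_n) (u v : R) :
    \sum_(k < n) y k * (e * ((i == k)%:R * u + v * (j == k)%:R)) =
    e * (y i * u + y j * v).
  rewrite mulrDr -(sum_delta i (fun k => y k * u)).
  rewrite -(sum_delta j (fun k => y k * v)).
  rewrite mulr_sumr mulr_sumr -big_split /=; apply: eq_bigr => k _; ring.
rewrite /schouten; under eq_bigr => k _ do rewrite !D_pi_quad.
by rewrite !big_split /= !pick_two.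
Qed.

Lemma schouten_pi (a b c : 'I_n) : schouten D pi a b c =
  jcoef a b c * x c + jcoef c a b * x b + jcoef b c a * x a.
Proof.
rewrite schouten_pi_sum !pi_quad /jcoef.
rewrite (alpha_skew b a) (alpha_skew c b) (alpha_skew a c).
rewrite (beta_skew b a) (beta_skew c b) (beta_skew a c).
ring.
Qed.

(* Skewness gives zero diagonals when 2 is invertible; we assume it here. *)
Hypothesis alpha_diag : forall i, alpha i i = 0.
Hypothesis beta_diag : forall i, beta i i = 0.

Lemma jcoef_diag i k : jcoef i i k = 0.
Proof. by rewrite /jcoef beta_diag mul0r. Qed.

Lemma jcoef_pair i k : jcoef i k i + jcoef k i i = 0.
Proof. rewrite /jcoef !alpha_diag (beta_skew i k); ring. Qed.

Lemma schouten_pi_eq0 :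
  (forall i j k, i != j -> j != k -> i != k -> jcoef i j k = 0) ->
  forall a b c, schouten D pi a b c = 0.
Proof.
move=> jcoef0 a b c; rewrite schouten_pi.
case: (eqVneq a b) => [<-|ab].
  by rewrite jcoef_diag mul0r add0r -mulrDl addrC jcoef_pair mul0r.
case: (eqVneq b c) => [<-|bc].
  by rewrite jcoef_diag mul0r addr0 -mulrDl addrC jcoef_pair mul0r.
case: (eqVneq a c) => [<-|ac].
  by rewrite jcoef_diag mul0r addr0 -mulrDl jcoef_pair mul0r.
by rewrite !jcoef0 ?mul0r ?addr0 // eq_sym.
Qed.
End QuadraticBracket.

Section RationalFunctions.
Variables (F : fieldType) (n : nat).
Local Notation P := {mpoly F[n]}.
Local Notation tf := (@tofrac P).

Lemma mderiv_var (k i : 'I_n) : ('X_i : P)^`M(k) = (i == k)%:R.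
Proof.
rewrite mderivX mnm1E; case: eqP => [->|_]; last by rewrite scale0r.
have -> : (U_(k) - U_(k))%MM = 0%MM.
  by apply/mnmP => j; rewrite mnmBE mnm0E subnn.
by rewrite mpolyX0 scale1r.
Qed.

Lemma fderiv_const (k : 'I_n) (c : F) : fderiv k (tf c%:MP) = 0.
Proof. by rewrite fderiv_tofrac mderivC rmorph0. Qed.

Lemma fderiv_xgen (k i : 'I_n) : fderiv k (xgen F i) = (i == k)%:R.
Proof. by rewrite /xgen fderiv_tofrac mderiv_var rmorph_nat. Qed.

Lemma xgen_indep (i j k : 'I_n) (c1 c2 c3 : F) : j != k -> i != k ->
  tf c1%:MP * xgen F k + tf c2%:MP * xgen F j + tf c3%:MP * xgen F i = 0 ->
  c1 = 0.
Proof.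
move=> jk ik; rewrite /xgen -!rmorphM -!rmorphD /=.
move/eqP; rewrite tofrac_eq0 => /eqP/(congr1 (mcoeff U_(k))).
rewrite !mcoeffD !mcoeffCM !mcoeffXU mcoeff0 eqxx (negbTE jk) (negbTE ik).
by rewrite !mulr0 !addr0 mulr1.
Qed.
End RationalFunctions.

Lemma skew_entry (F : fieldType) (n : nat) (M : 'M[F]_n) :
  skew_mat M -> forall i j, M j i = - M i j.
Proof.
by move=> skM i j; have := congr1 (fun N : 'M[F]_n => N i j) skM; rewrite !mxE.
Qed.

Lemma skew_diag (F : numFieldType) (n : nat) (M : 'M[F]_n) :
  skew_mat M -> forall i, M i i = 0.
Proof. by move=> skM i; apply/eqP; rewrite -eqNr -{1}(skew_entry skM i i). Qed.

Section QuadraticDeformation.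
Variables (F : numFieldType) (n : nat) (A B : 'M[F]_n).
Hypotheses (skA : skew_mat A) (skB : skew_mat B).
Local Notation tf := (@tofrac {mpoly F[n]}).
Local Notation phi M := (fun i j : 'I_n => tf (M i j)%:MP).
Local Notation x := (@xgen F n).

Lemma phi_skew (M : 'M[F]_n) :
  skew_mat M -> forall i j, phi M j i = - phi M i j.
Proof. by move=> skM i j; rewrite /= (skew_entry skM i j) !raddfN. Qed.

Lemma phi_diag (M : 'M[F]_n) : skew_mat M -> forall i, phi M i i = 0.
Proof. by move=> skM i; rewrite /= (skew_diag skM i) !raddf0. Qed.

Lemma phi_const (M : 'M[F]_n) k i j : fderiv k (phi M i j) = 0.
Proof. exact: fderiv_const. Qed.

Lemma quad_piE i j : quad_pi A B i j = phi A i j * x i * x j + phi B i j.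
Proof. by rewrite /quad_pi rmorphD !rmorphM. Qed.

Lemma quad_jcoef i j k :
  jcoef (phi A) (phi B) i j k = tf (B i j * (A i k + A j k))%:MP.
Proof. by rewrite /jcoef !(rmorphM, rmorphD). Qed.

Lemma quad_pi_skew i j : quad_pi A B j i = - quad_pi A B i j.
Proof. exact: (pi_quad_skew (phi_skew skA) (phi_skew skB) quad_piE). Qed.


Lemma quad_jacobiator_coord i j k :
  bider (quad_pi A B) (x i) (bider (quad_pi A B) (x j) (x k)) +
  bider (quad_pi A B) (x j) (bider (quad_pi A B) (x k) (x i)) +
  bider (quad_pi A B) (x k) (bider (quad_pi A B) (x i) (x j)) =
  tf (B i j * (A i k + A j k))%:MP * x k +
  tf (B k i * (A k j + A i j))%:MP * x j +
  tf (B j k * (A j i + A k i))%:MP * x i.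
Proof.
rewrite (jacobiator_coord (@fderivD F n) (@fderivM F n) (@fderiv_comm F n)
  quad_pi_skew (@fderiv_xgen F n)).
rewrite (schouten_pi (@fderivD F n) (@fderivM F n) (@fderiv_xgen F n)
  (phi_const A) (phi_const B) (phi_skew skA) (phi_skew skB) quad_piE).
by rewrite !quad_jcoef.
Qed.

Lemma quad_schouten0 :
  (forall i j k : 'I_n, i != j -> j != k -> i != k ->
     B i j * (A i k + A j k) = 0) ->
  forall a b c, schouten (@fderiv F n) (quad_pi A B) a b c = 0.
Proof.
move=> cond; apply: (schouten_pi_eq0 (@fderivD F n) (@fderivM F n)
  (@fderiv_xgen F n) (phi_const A) (phi_const B) (phi_skew skA) (phi_skew skB)
  quad_piE (phi_diag skA) (phi_diag skB)) => i j k ij jk ik.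
by rewrite quad_jcoef cond ?rmorph0.
Qed.

End QuadraticDeformation.

(* Jacobi on x_i, x_j, x_k forces b_ij (a_ik + a_jk) = 0 by independence
   of the generators; conversely the condition kills every J(a,b,c). *)
Theorem proposition5p2 (F : numFieldType) (n : nat) (A B : 'M[F]_n)
  (skewA : skew_mat A) (skewB : skew_mat B) :
  jacobi (bider (quad_pi A B)) <->
  (forall i j k : 'I_n, i != j -> j != k -> i != k ->
     B i j * (A i k + A j k) = 0).
Proof.
split=> [jac i j k ij jk ik | cond f g h].
- have := jac (xgen F i) (xgen F j) (xgen F k).
  by rewrite (quad_jacobiator_coord skewA skewB); apply: xgen_indep.
- apply: (jacobi_of_schouten0 (@fderivD F n) (@fderivM F n) (@fderiv_comm F n)
    (quad_pi_skew skewA skewB)).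
  exact: quad_schouten0.
Qed.
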